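(* Let $N \in \mathbb{R}^{n \times r}$, $V \in \mathbb{R}^{r \times n}$, and for $\kappa\in\mathbb{R}^r_+$ let $f_\kappa(x) = N_\kappa x^V$ on $\mathbb{R}^n_+$; let $S = \mathrm{im}(N)$. Let $M \in \mathbb{R}^{d' \times n}$ and $\gamma\colon \mathbb{R}^r_+\to\mathbb{R}_+^{d'}$, and set $Y_\kappa = \{x \in \mathbb{R}^n_+ \mid x^M = \gamma(\kappa)\}$. Assume $Y_\kappa\subseteq\{x\in\mathbb{R}^n_+\mid f_\kappa(x)=0\}$ for all $\kappa\in\mathbb{R}^r_+$. Assume moreover: (i) $\sigma(\ker(M)) \cap \sigma(S) \neq \{0\}$; (ii) for every $x \in \mathbb{R}^n_+$ there exists $\kappa \in \mathbb{R}^r_+$ with $x \in Y_\kappa$. Then there exist $\kappa^* \in \mathbb{R}^r_+$ and distinct $x^*,y^* \in \mathbb{R}^n_+$ such that $x^*, y^* \in Y_{\kappa^*}$ and $x^* - y^* \in S$.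
   Context: $\mathbb{R}_+$ denotes the strictly positive reals. $(x^V)_j=\prod_i x_i^{v_{ji}}$ and $(x^M)_k=\prod_i x_i^{m_{ki}}$ (real exponents), $N_\kappa=N\,\mathrm{diag}(\kappa)$. $\sigma$ is the componentwise sign vector, $\sigma(T)=\{\sigma(x)\mid x\in T\}$, and $0$ denotes the zero sign vector. *)

From Stdlib Require Import Reals.
Open Scope R_scope.

(* Vectors in R^n are functions nat -> R, only indices < n matter.
   Matrices in R^{a x b} are functions nat -> nat -> R (row, column). *)

Fixpoint sumR (n : nat) (f : nat -> R) : R :=
  match n with O => 0 | S m => sumR m f + f m end.

Fixpoint prodR (n : nat) (f : nat -> R) : R :=
  match n with O => 1 | S m => prodR m f * f m end.

Definition posvec (n : nat) (x : nat -> R) : Prop := forall i, (i < n)%nat -> 0 < x i.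

Definition monom (n : nat) (A : nat -> nat -> R) (x : nat -> R) (k : nat) : R :=
  prodR n (fun i => Rpower (x i) (A k i)).

(* f_kappa(x) = N diag(kappa) x^V,  N : n x r, V : r x n *)
Definition fk (n r : nat) (N V : nat -> nat -> R) (kappa x : nat -> R) (i : nat) : R :=
  sumR r (fun j => N i j * kappa j * monom n V x j).

Definition Yk (n d' : nat) (M : nat -> nat -> R) (gamma : (nat -> R) -> (nat -> R))
  (kappa x : nat -> R) : Prop :=
  posvec n x /\ forall k, (k < d')%nat -> monom n M x k = gamma kappa k.

Definition in_image (n r : nat) (N : nat -> nat -> R) (v : nat -> R) : Prop :=
  exists z : nat -> R, forall i, (i < n)%nat -> v i = sumR r (fun j => N i j * z j).

Definition in_kernel (n d' : nat) (M : nat -> nat -> R) (v : nat -> R) : Prop :=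
  forall k, (k < d')%nat -> sumR n (fun i => M k i * v i) = 0.

Definition sgn (a : R) : R :=
  match Rlt_le_dec 0 a with
  | left _ => 1
  | right _ => match Rlt_le_dec a 0 with left _ => -1 | right _ => 0 end
  end.

(* sigma(ker M) ∩ sigma(S) <> {0}: some nonzero sign vector lies in both *)
Definition sign_cond (n r d' : nat) (N M : nat -> nat -> R) : Prop :=
  exists u v : nat -> R,
    in_kernel n d' M u /\ in_image n r N v /\
    (forall i, (i < n)%nat -> sgn (u i) = sgn (v i)) /\
    (exists i, (i < n)%nat /\ sgn (u i) <> 0).

(* The covering hypothesis (ii) reduces the theorem to a purely
   geometric statement about the fibres of the monomial map x |-> x^M: it
   suffices to find distinct positive x, y with x^M = y^M and x - y in S,
   for then any kappa with x in Y_kappa also has y in Y_kappa.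
   Such a pair comes from the sign condition (i): take u in ker(M) and v in S
   with sign(u) = sign(v), u <> 0, and set x_i = y_i e^{u_i}.  Since Mu = 0,
   the monomials x^M and y^M agree (monomials are exponentials of linear
   forms in log x).  The free choice of y_i > 0 is used to make
   x_i - y_i = y_i (e^{u_i} - 1) equal to v_i, which is possible exactly
   because e^{u_i} - 1 and v_i have the same sign. *)

From Stdlib Require Import Reals Lra Lia.
Open Scope R_scope.

Lemma sumR_ext n f g :
  (forall i, (i < n)%nat -> f i = g i) -> sumR n f = sumR n g.
Proof.
  induction n as [|n IH]; simpl; intros Hfg; [reflexivity|].
  rewrite IH by (intros; apply Hfg; lia). rewrite Hfg by lia. reflexivity.
Qed.

Lemma sumR_plus n f g : sumR n (fun i => f i + g i) = sumR n f + sumR n g.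
Proof. induction n as [|n IH]; simpl; [lra|]. rewrite IH; lra. Qed.

Lemma prodR_exp n g : prodR n (fun i => exp (g i)) = exp (sumR n g).
Proof.
  induction n as [|n IH]; simpl; [now rewrite exp_0|].
  now rewrite IH, exp_plus.
Qed.

Lemma monom_exp n A x k :
  monom n A x k = exp (sumR n (fun i => A k i * ln (x i))).
Proof. unfold monom, Rpower. apply prodR_exp. Qed.

(* Rescaling x_i by e^{u_i} multiplies x^A by e^{(A u)_k}; hence monomials
   are invariant under rescaling by the exponential of a kernel vector. *)
Lemma monom_scale_exp n A y u k :
  posvec n y ->
  monom n A (fun i => y i * exp (u i)) k
  = monom n A y k * exp (sumR n (fun i => A k i * u i)).
Proof.
  intros Hy. rewrite !monom_exp, <- exp_plus, <- sumR_plus. f_equal.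
  apply sumR_ext. intros i Hi.
  rewrite ln_mult, ln_exp by (auto using exp_pos). ring.
Qed.

Lemma sgn_same_cases a b :
  sgn a = sgn b -> (0 < a /\ 0 < b) \/ (a < 0 /\ b < 0) \/ (a = 0 /\ b = 0).
Proof.
  unfold sgn.
  destruct (Rlt_le_dec 0 a); [|destruct (Rlt_le_dec a 0)];
  destruct (Rlt_le_dec 0 b); try destruct (Rlt_le_dec b 0); intros E; lra.
Qed.

(* A positive solution t of t (e^a - 1) = b, chosen as 1 when a = 0. *)
Definition exp_scale (a b : R) : R :=
  if Req_EM_T a 0 then 1 else b / (exp a - 1).

Lemma exp_scale_spec a b :
  sgn a = sgn b -> 0 < exp_scale a b /\ exp_scale a b * exp a - exp_scale a b = b.
Proof.
  intros Hab. unfold exp_scale.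
  destruct (Req_EM_T a 0) as [Ha|Ha].
  - destruct (sgn_same_cases a b Hab) as [H|[H|H]]; try lra.
    rewrite Ha, exp_0. lra.
  - destruct (sgn_same_cases a b Hab) as [[Ha' Hb]|[[Ha' Hb]|H]]; [| |lra].
    + assert (Hexp : 1 < exp a) by (rewrite <- exp_0; apply exp_increasing; lra).
      split; [apply Rdiv_lt_0_compat; lra | field; lra].
    + assert (Hexp : exp a < 1) by (rewrite <- exp_0; apply exp_increasing; lra).
      replace (b / (exp a - 1)) with (- b / (1 - exp a)) by (field; lra).
      split; [apply Rdiv_lt_0_compat; lra | field; lra].
Qed.

Lemma same_fiber_pair_in_image n r d' (N M : nat -> nat -> R) :
  sign_cond n r d' N M ->
  exists xs ys : nat -> R,
    posvec n xs /\ posvec n ys /\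
    (exists i, (i < n)%nat /\ xs i <> ys i) /\
    (forall k, (k < d')%nat -> monom n M xs k = monom n M ys k) /\
    in_image n r N (fun i => xs i - ys i).
Proof.
  intros [u [v [Hker [[z Hz] [Hsgn [i0 [Hi0 Hu0]]]]]]].
  set (ys := fun i => exp_scale (u i) (v i)).
  set (xs := fun i => ys i * exp (u i)).
  assert (Hys : posvec n ys) by (intros i Hi; apply exp_scale_spec, Hsgn, Hi).
  assert (Hdiff : forall i, (i < n)%nat -> xs i - ys i = v i)
    by (intros i Hi; apply exp_scale_spec, Hsgn, Hi).
  exists xs, ys. repeat split.
  - intros i Hi. apply Rmult_lt_0_compat; [apply Hys, Hi | apply exp_pos].
  - exact Hys.
  - exists i0. split; [exact Hi0|]. intros Heq.
    assert (Hexp : exp (u i0) = exp 0).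
    { rewrite exp_0. apply (Rmult_eq_reg_l (ys i0)); [|apply Rgt_not_eq, Hys, Hi0].
      unfold xs in Heq. lra. }
    apply Hu0. unfold sgn. rewrite (exp_inv _ _ Hexp).
    destruct (Rlt_le_dec 0 0); [lra|]. destruct (Rlt_le_dec 0 0); [lra|reflexivity].
  - intros k Hk. unfold xs. rewrite monom_scale_exp, (Hker k Hk), exp_0 by exact Hys.
    apply Rmult_1_r.
  - exists z. intros i Hi. rewrite Hdiff by exact Hi. apply Hz, Hi.
Qed.

Theorem mainTheorem18 (n r d' : nat) (N V M : nat -> nat -> R)
  (gamma : (nat -> R) -> (nat -> R))
  (* gamma : R^r_+ -> R^{d'}_+ : depends only on the first r coordinates *)
  (Hgamma_ext : forall kappa kappa', (forall j, (j < r)%nat -> kappa j = kappa' j) ->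
       forall k, (k < d')%nat -> gamma kappa k = gamma kappa' k)
  (Hgamma_pos : forall kappa, posvec r kappa -> posvec d' (gamma kappa))
  (HY : forall kappa, posvec r kappa -> forall x, Yk n d' M gamma kappa x ->
          forall i, (i < n)%nat -> fk n r N V kappa x i = 0)
  (Hsign : sign_cond n r d' N M)
  (Hcover : forall x, posvec n x -> exists kappa, posvec r kappa /\ Yk n d' M gamma kappa x) :
  exists kappa xs ys : nat -> R,
    posvec r kappa /\
    (exists i, (i < n)%nat /\ xs i <> ys i) /\
    Yk n d' M gamma kappa xs /\ Yk n d' M gamma kappa ys /\
    in_image n r N (fun i => xs i - ys i).
Proof.
  destruct (same_fiber_pair_in_image n r d' N M Hsign)
    as [xs [ys [Hxs [Hys [Hdistinct [Hfiber Himage]]]]]].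
  (* Any kappa whose Y_kappa contains xs also contains ys, as x^M = y^M. *)
  destruct (Hcover xs Hxs) as [kappa [Hkappa [_ Hgam]]].
  exists kappa, xs, ys.
  split; [exact Hkappa|]. split; [exact Hdistinct|].
  split; [split; assumption|]. split; [|exact Himage].
  split; [exact Hys|]. intros k Hk. rewrite <- Hfiber by exact Hk. apply Hgam, Hk.
Qed.
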